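(* Let $(a_p)_{p\in\mathbb{Z}}$ be a strictly positive rapidly decreasing sequence with $a_p=a_{-p}$ for all $p$ and $(a_p/a_{p+1})$ bounded, and let $H$ be the associated Hilbert space completion of $L^*\mathbb{C}^n\cong\mathcal{S}^*\otimes\mathbb{C}^n$. Then the polynomial loop group $L_{\mathrm{pol}}U_n$ acts continuously on $H$ and preserves the standard polarisation; that is, the image of $L_{\mathrm{pol}}U_n$ in the bounded operators on $H$ lies in $\mathrm{GL}_{\mathcal{J}}(H)$.
   Context: $\mathcal{S}^*$ is the dual of the space of rapidly decreasing complex $\mathbb{Z}$-indexed sequences, identified with $L^*\mathbb{C}$ (distributions on $S^1$) via Fourier coefficients, with basis elements $e_p$. The inner product on $\mathcal{S}^*$ is $\langle b,c\rangle=\sum_pb^p\overline{c^p}a_p$, tensored with the standard inner product of $\mathbb{C}^n$. The operator $z$ acts by $ze_p=e_{p-1}$; a polynomial loop $\sum_q z^qA_q\in L_{\mathrm{pol}}U_n$ ($A_q\in M_n(\mathbb{C})$) acts by $\sum_q z^q\otimes A_q$. Let $J$ on $\mathcal{S}^*$ be $Je_p=-(-1)^{\mathrm{sign}(p)}ie_p$, extended to $H$ as $J\otimes I_n$. A polarising operator on a complex Hilbert space is a bounded $J$ with $J^2+I$ trace class and $J\pm iI$ not of finite rank; a polarisation is an equivalence class of polarising operators modulo Hilbert–Schmidt differences; the standard polarisation $\mathcal{J}$ on $H$ is the class of $J\otimes I_n$. $\mathrm{GL}_{\mathcal{J}}(H)$ is the group of invertible bounded operators $A$ with $[A,J]$ Hilbert–Schmidt.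 *)

From HB Require Import structures.
From mathcomp Require Import all_boot all_order all_algebra.
From mathcomp Require Import all_classical all_reals all_analysis.
From mathcomp Require Import complex.
Set Implicit Arguments. Unset Strict Implicit. Unset Printing Implicit Defensive.
Import Order.TTheory GRing.Theory Num.Theory.
Local Open Scope ring_scope.
Local Open Scope classical_set_scope.

Section Defs.
Variable R : realType.
Local Notation C := (R[i]).

(* Elements of S^* ⊗ C^n: Z-indexed sequences b = sum_p e_p ⊗ b_p, b_p in C^n. *)
Definition seqH (n : nat) := int -> 'cV[C]_n.

Definition csq (z : C) : R := (complex.Re z) ^+ 2 + (complex.Im z) ^+ 2.
Definition vsq n (v : 'cV[C]_n) : R := \sum_(j < n) csq (v j 0).

Definition wnorm2 n (a : int -> R) (b : seqH n) : \bar R :=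
  (\esum_(p in [set: int]) (a p * vsq (b p))%:E)%E.

(* b belongs to the Hilbert space completion H *)
Definition inH n (a : int -> R) (b : seqH n) : Prop := (wnorm2 a b < +oo)%E.

Definition bounded_op n (a : int -> R) (T : seqH n -> seqH n) : Prop :=
  exists M : R, forall b, inH a b -> (wnorm2 a (T b) <= M%:E * wnorm2 a b)%E.

Definition ebasis n (p : int) (j : 'I_n) : seqH n :=
  fun q => if q == p then \col_(k < n) (if k == j then 1 else 0) else 0.

(* Hilbert-Schmidt: sum over the orthonormal basis (e_p ⊗ eps_j)/sqrt(a_p) of ||K f||^2 finite *)
Definition hilbert_schmidt n (a : int -> R) (K : seqH n -> seqH n) : Prop :=
  (\esum_(x in [set: int * 'I_n]) ((a x.1)^-1)%:E * wnorm2 a (K (ebasis x.1 x.2)) < +oo)%E.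

Definition Jop n (b : seqH n) : seqH n :=
  fun p => (if 0 < p then 'i else - 'i) *: b p.

Definition commJ n (T : seqH n -> seqH n) (b : seqH n) : seqH n :=
  fun p => T (Jop b) p - Jop (T b) p.

Definition in_GL_J n (a : int -> R) (T : seqH n -> seqH n) : Prop :=
  [/\ bounded_op a T,
      exists S : seqH n -> seqH n, bounded_op a S /\
        (forall b, inH a b -> S (T b) = b /\ T (S b) = b)
    & hilbert_schmidt a (commJ T)].

Definition loop_eval n (N : nat) (A : int -> 'M[C]_n) (z : C) : 'M[C]_n :=
  \sum_(k < N.*2.+1) (z ^ (k%:Z - N%:Z)) *: A (k%:Z - N%:Z).

Definition unitary_mx n (M : 'M[C]_n) : Prop := M *m (map_mx Num.conj M)^T = 1%:M.

(* A is (the coefficient family of) an element of L_pol U_n supported in [-N, N] *)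
Definition in_LpolU n (N : nat) (A : int -> 'M[C]_n) : Prop :=
  (forall q : int, (N < `|q|)%N -> A q = 0) /\
  (forall z : C, `|z| = 1 -> unitary_mx (loop_eval N A z)).

(* action of sum_q z^q ⊗ A_q, with z e_p = e_{p-1}: (γ b)_p = sum_q A_q b_{p+q} *)
Definition loop_act n (N : nat) (A : int -> 'M[C]_n) (b : seqH n) : seqH n :=
  fun p => \sum_(k < N.*2.+1) A (k%:Z - N%:Z) *m b (p + (k%:Z - N%:Z)).

Definition admissible_weight (a : int -> R) : Prop :=
  [/\ forall p, 0 < a p,
      forall p, a p = a (- p),
      forall k : nat, exists M : R, forall p : int, a p * (`|p|%N%:R) ^+ k <= M
    & exists M : R, forall p : int, a p / a (p + 1) <= M].

End Defs.

From HB Require Import structures.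
From mathcomp Require Import all_boot all_order all_algebra.
From mathcomp Require Import all_classical all_reals all_analysis.
From mathcomp Require Import complex.
From mathcomp Require Import zify ring lra.
Import Order.TTheory GRing.Theory Num.Theory.
Set Implicit Arguments. Unset Strict Implicit. Unset Printing Implicit Defensive.
Local Open Scope ring_scope.

(* Since a is even and a_p / a_(p+1)
   is bounded, a_p <= L^N a_(p+q) for |q| <= N, so each shift, and hence gamma,
   is bounded on H.  Unitarity
   gamma(z) gamma(z)^* = 1 holds at infinitely many points of the unit circle,
   so it is an identity of Laurent polynomials; comparing coefficients shows
   that the loop z |-> gamma(z)^* acts as a two-sided inverse of gamma.
   Finally J is diagonal with a sign that only changes at 0, so
   ([gamma, J] b)_p = sum_q (J_(p+q) - J_p) A_q b_(p+q) vanishes unless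
   |p + q| <= N: the commutator has finite rank, hence is Hilbert-Schmidt. *)

Local Notation idx N k := ((k : nat)%:Z - (N : nat)%:Z).

Section UnitCircle.
Variable C : numClosedFieldType.

Definition cayley (t : nat) : C := (1 + t%:R * 'i) / (1 - t%:R * 'i).

Lemma conjC_cayley_num (t : nat) : (1 + t%:R * 'i : C)^* = 1 - t%:R * 'i.
Proof. by rewrite rmorphD rmorph1 rmorphM rmorph_nat -mulrN; congr (_ + _ * _); exact: conjCi. Qed.

Lemma cayley_den_neq0 (t : nat) : (1 - t%:R * 'i : C) != 0.
Proof.
have norm2 : (1 + t%:R * 'i) * (1 - t%:R * 'i) = (1 + t ^ 2)%N%:R :> C.
  rewrite natrD natrX.
  have -> : (1 + t%:R * 'i) * (1 - t%:R * 'i) = 1 - t%:R ^+ 2 * 'i ^+ 2 :> C by ring.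
  by rewrite sqrCi mulrN1 opprK.
apply: contraTneq isT => den0.
by move: norm2; rewrite den0 mulr0 => /eqP; rewrite eq_sym pnatr_eq0.
Qed.

Lemma norm_cayley t : `|cayley t| = 1.
Proof.
rewrite normf_div -conjC_cayley_num norm_conjC divff //.
by rewrite normr_eq0 -conjC_eq0 conjC_cayley_num cayley_den_neq0.
Qed.

Lemma cayley_inj : injective cayley.
Proof.
move=> s t /eqP; rewrite /cayley eqr_div ?cayley_den_neq0 // => /eqP eq_st.
have : (s%:R - t%:R) * (2 * 'i) = 0 :> C.
  rewrite -(subrr ((1 + s%:R * 'i) * (1 - t%:R * 'i))) {2}eq_st; ring.
by move/eqP; rewrite !mulf_eq0 (negbTE (neq0Ci _)) pnatr_eq0 /= !orbF subr_eq0 eqr_nat => /eqP.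
Qed.

Lemma poly_eq0_on_unit_circle (p : {poly C}) :
  (forall z, `|z| = 1 -> p.[z] = 0) -> p = 0.
Proof.
move=> p0; apply: contraTeq isT => nz_p.
have := max_poly_roots nz_p (rs := map cayley (iota 0 (size p))).
rewrite size_map size_iota ltnn; apply.
  by apply/allP => _ /mapP [t _ ->]; rewrite /root p0 ?norm_cayley.
by rewrite map_inj_uniq ?iota_uniq //; exact: cayley_inj.
Qed.

Lemma coef_eq_on_unit_circle m k M (D E : nat -> 'M[C]_(m, k)) :
  (forall z, `|z| = 1 -> \sum_(i < M) z ^+ i *: D i = \sum_(i < M) z ^+ i *: E i) ->
  forall i, (i < M)%N -> D i = E i.
Proof.
move=> DE i ltiM; apply/matrixP => r c; apply/eqP; rewrite -subr_eq0; apply/eqP.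
pose p : {poly C} := \poly_(i < M) (D i r c - E i r c).
suff p0 : p = 0 by have := congr1 (fun q : {poly C} => q`_i) p0; rewrite coef_poly ltiM coef0.
apply: poly_eq0_on_unit_circle => z z1.
rewrite horner_poly; have := congr1 (fun A : 'M[C]_(m, k) => A r c) (DE z z1).
rewrite !summxE => /eqP; rewrite -subr_eq0 -sumrB => /eqP {2}<-.
by apply: eq_bigr => j _; rewrite !mxE mulrBl mulrC [_ * z ^+ _]mulrC.
Qed.

End UnitCircle.

Lemma sum_pairs_by_total (V : nmodType) K (F : nat -> 'I_K -> 'I_K -> V) :
  \sum_(k < K) \sum_(l < K) F (k + l)%N k l =
  \sum_(m < K.*2) \sum_(k < K) \sum_(l < K) (if m == (k + l)%N :> nat then F m k l else 0).
Proof.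
rewrite [RHS]exchange_big; apply: eq_bigr => k _.
rewrite [RHS]exchange_big; apply: eq_bigr => l _.
rewrite -big_mkcond /= (big_ord1_eq _ (fun m => F m k l)).
by rewrite -addnn -addSn leq_add // ltnW.
Qed.

Section LoopAlgebra.
Variable R : realType.
Local Notation C := R[i].

Definition loop_mul_coef n N (Y X : int -> 'M[C]_n) (m : nat) : 'M[C]_n :=
  \sum_(k < N.*2.+1) \sum_(l < N.*2.+1)
     (if m == (k + l)%N :> nat then Y (idx N k) *m X (idx N l) else 0).

Lemma loop_eval_mul n N (Y X : int -> 'M[C]_n) (z : C) : z != 0 ->
  z ^+ N.*2 *: (loop_eval N Y z *m loop_eval N X z) =
  \sum_(m < (N.*2.+1).*2) z ^+ m *: loop_mul_coef N Y X m.
Proof.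
move=> z0; rewrite (eq_bigr (fun m : 'I_(N.*2.+1).*2 => \sum_(k < N.*2.+1) \sum_(l < N.*2.+1)
  (if m == (k + l)%N :> nat then z ^+ m *: (Y (idx N k) *m X (idx N l)) else 0))); last first.
  move=> m _; rewrite scaler_sumr; apply: eq_bigr => k _; rewrite scaler_sumr.
  by apply: eq_bigr => l _; rewrite (fun_if (fun A => z ^+ m *: A)) scaler0.
rewrite -(sum_pairs_by_total (fun m k l => z ^+ m *: (Y (idx N k) *m X (idx N l)))).
rewrite /loop_eval mulmx_suml scaler_sumr; apply: eq_bigr => k _.
rewrite mulmx_sumr scaler_sumr; apply: eq_bigr => l _.
rewrite -scalemxAl -scalemxAr !scalerA; congr (_ *: _).
by rewrite !exprnP -!expfzDr //; congr (z ^ _); lia.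
Qed.

Lemma loop_mul_coef_unit n N (Y X : int -> 'M[C]_n) :
  (forall z : C, `|z| = 1 -> loop_eval N Y z *m loop_eval N X z = 1%:M) ->
  forall m, (m < (N.*2.+1).*2)%N ->
  loop_mul_coef N Y X m = if m == N.*2 then 1%:M else 0.
Proof.
move=> YX1; apply: coef_eq_on_unit_circle => z z1.
have z0 : z != 0 by rewrite -normr_gt0 z1.
rewrite -loop_eval_mul // YX1 //.
rewrite (eq_bigr (fun m : 'I__ => if m == N.*2 :> nat then z ^+ m *: 1%:M else 0)); last first.
  by move=> m _; rewrite (fun_if (fun A => z ^+ m *: A)) scaler0.
by rewrite -big_mkcond (big_ord1_eq _ (fun m => z ^+ m *: 1%:M)); case: ltnP => //; lia.
Qed.

Lemma loop_act_mul n N (Y X : int -> 'M[C]_n) (b : seqH R n) p :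
  loop_act N Y (loop_act N X b) p =
  \sum_(m < (N.*2.+1).*2) loop_mul_coef N Y X m *m b (p + m%:Z - (N.*2)%:Z).
Proof.
pose F m (k l : 'I_N.*2.+1) := Y (idx N k) *m X (idx N l) *m b (p + m%:Z - (N.*2)%:Z).
rewrite (eq_bigr (fun m : 'I__ => \sum_(k < N.*2.+1) \sum_(l < N.*2.+1)
  (if m == (k + l)%N :> nat then F m k l else 0))); last first.
  move=> m _; rewrite mulmx_suml; apply: eq_bigr => k _; rewrite mulmx_suml.
  by apply: eq_bigr => l _; rewrite (fun_if (fun A => A *m _)) mul0mx.
rewrite -sum_pairs_by_total.
rewrite /loop_act; apply: eq_bigr => k _; rewrite mulmx_sumr; apply: eq_bigr => l _.
by rewrite /F mulmxA; congr (_ *m b _); lia.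
Qed.

Lemma loop_act_inverse n N (Y X : int -> 'M[C]_n) :
  (forall z : C, `|z| = 1 -> loop_eval N Y z *m loop_eval N X z = 1%:M) ->
  forall b : seqH R n, loop_act N Y (loop_act N X b) = b.
Proof.
move=> YX1 b; apply/funext => p; rewrite loop_act_mul.
rewrite (eq_bigr (fun m : 'I__ => if m == N.*2 :> nat then b p else 0)); last first.
  move=> m _; rewrite loop_mul_coef_unit //.
  by case: eqP => [->|_]; rewrite ?mul1mx ?mul0mx //; congr b; lia.
by rewrite -big_mkcond (big_ord1_eq _ (fun=> b p)); case: ltnP => //; lia.
Qed.

Definition loop_adj n (A : int -> 'M[C]_n) (q : int) : 'M[C]_n :=
  (map_mx Num.conj (A (- q)))^T.

Lemma loop_eval_adj n N (A : int -> 'M[C]_n) (z : C) : `|z| = 1 ->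
  (map_mx Num.conj (loop_eval N A z))^T = loop_eval N (loop_adj A) z.
Proof.
move=> z1; have z0 : z \is a GRing.unit by rewrite unitfE -normr_gt0 z1.
have conj_z : z^* = z^-1 by rewrite invC_norm z1 expr1n invr1 mul1r.
rewrite /loop_eval map_mx_sum linear_sum (reindex_inj rev_ord_inj) /=.
apply: eq_bigr => k _; rewrite map_mxZ linearZ /= /loop_adj.
have -> : idx N (rev_ord k) = - idx N k by rewrite /=; have := ltn_ord k; lia.
by congr (_ *: _); rewrite (rmorphXz _ _ z0) /= conj_z exprz_inv opprK.
Qed.

End LoopAlgebra.

Lemma sqr_sum_le (F : realFieldType) K (x : 'I_K -> F) :
  (\sum_(k < K) x k) ^+ 2 <= K%:R * \sum_(k < K) x k ^+ 2.
Proof.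
elim: K x => [|K IH] x; first by rewrite !big_ord0 expr0n mul0r.
rewrite !big_ord_recr /= -natr1.
set S := \sum_(k < K) _; set T := \sum_(k < K) _; set y := x ord_max.
have IHS : S ^+ 2 <= K%:R * T by exact: IH.
have T0 : 0 <= T by rewrite sumr_ge0 // => k _; exact: sqr_ge0.
have [K0|K0] := eqVneq K 0%N.
  rewrite K0 mul0r in IHS.
  have S0 : S = 0 by apply/eqP; rewrite -sqrf_eq0 eq_le sqr_ge0 andbT.
  by rewrite S0 K0 !add0r mul1r lerDr.
have {}K0 : 0 < K%:R :> F by rewrite ltr0n lt0n.
have := sqr_ge0 (K%:R * y - S); nra.
Qed.

Section SquaredNorms.
Variable R : realType.
Local Notation C := R[i].

Definition frob2 m n (M : 'M[C]_(m, n)) : R := \sum_(i < m) \sum_(j < n) csq (M i j).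

Lemma csq_ge0 (z : C) : 0 <= csq z.
Proof. by rewrite addr_ge0 ?sqr_ge0. Qed.

Lemma vsq_ge0 n (v : 'cV[C]_n) : 0 <= vsq v.
Proof. by rewrite sumr_ge0 // => j _; exact: csq_ge0. Qed.

Lemma vsq0 n : vsq (0 : 'cV[C]_n) = 0.
Proof. by rewrite /vsq big1 // => j _; rewrite mxE /csq expr0n addr0. Qed.

Lemma csqM (x y : C) : csq (x * y) = csq x * csq y.
Proof. by case: x y => [a b] [c d]; rewrite /csq /=; ring. Qed.

Lemma csq_sum_le K (w : 'I_K -> C) : csq (\sum_(k < K) w k) <= K%:R * \sum_(k < K) csq (w k).
Proof.
by rewrite /csq !raddf_sum big_split mulrDr /= lerD ?sqr_sum_le.
Qed.

Lemma vsq_sum_le n K (v : 'I_K -> 'cV[C]_n) :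
  vsq (\sum_(k < K) v k) <= K%:R * \sum_(k < K) vsq (v k).
Proof.
rewrite /vsq exchange_big mulr_sumr; apply: ler_sum => j _.
by rewrite summxE csq_sum_le.
Qed.

Lemma csq_le_vsq n (v : 'cV[C]_n) j : csq (v j 0) <= vsq v.
Proof. by rewrite /vsq (bigD1 j) //= lerDl sumr_ge0 // => i _; exact: csq_ge0. Qed.

Lemma frob2_ge0 m n (M : 'M[C]_(m, n)) : 0 <= frob2 M.
Proof. by do 2!(apply: sumr_ge0 => ? _); exact: csq_ge0. Qed.

Lemma vsq_mulmx_le m n (M : 'M[C]_(m, n)) (v : 'cV[C]_n) :
  vsq (M *m v) <= n%:R * frob2 M * vsq v.
Proof.
rewrite /vsq /frob2 -mulrA mulr_suml mulr_sumr; apply: ler_sum => i _.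
rewrite mxE; apply: le_trans (csq_sum_le _) _.
rewrite ler_wpM2l // mulr_suml; apply: ler_sum => j _.
by rewrite csqM ler_wpM2l ?csq_ge0 ?csq_le_vsq.
Qed.
End SquaredNorms.

Section Weights.
Variable R : realType.
Variable a : int -> R.

Lemma weight_shift_le L : 1 <= L ->
  (forall p, a p <= L * a (p + 1) /\ a p <= L * a (p - 1)) ->
  forall p j, a p <= L ^+ `|j| * a (p + j).
Proof.
move=> L1 step.
have L0 : 0 < L by apply: lt_le_trans L1.
have iter (m : nat) p : a p <= L ^+ m * a (p + m%:Z) /\ a p <= L ^+ m * a (p - m%:Z).
  elim: m p => [|m IH] p; first by rewrite expr0 !mul1r -[0%Z]/(0 : int) addr0.
  have [up down] := IH p.
  have [-> ->] : p + m.+1%:Z = p + m%:Z + 1 /\ p - m.+1%:Z = p - m%:Z - 1 by split; lia.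
  rewrite exprSr -!mulrA; split.
    by apply: le_trans up _; rewrite ler_pM2l ?exprn_gt0 //; case: (step (p + m%:Z)).
  by apply: le_trans down _; rewrite ler_pM2l ?exprn_gt0 //; case: (step (p - m%:Z)).
move=> p [m|m]; first by have [] := iter m p.
by rewrite NegzE; have [] := iter m.+1 p.
Qed.

Lemma admissible_weight_shift_le N : admissible_weight a ->
  exists2 L, 0 < L & forall p j, (`|j| <= N)%N -> a p <= L * a (p + j).
Proof.
case=> a_gt0 a_even _ [M ratioM]; pose L := `|M| + 1.
have L1 : 1 <= L by rewrite lerDr.
have up p : a p <= L * a (p + 1).
  rewrite -ler_pdivrMr // (le_trans (ratioM p)) // (le_trans (ler_norm M)) //.
  by rewrite lerDl.
have down p : a p <= L * a (p - 1).
  by rewrite a_even (le_trans (up (- p))) // a_even opprD opprK.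
exists (L ^+ N); first by rewrite exprn_gt0 // (lt_le_trans ltr01).
move=> p j jN; apply: le_trans (weight_shift_le L1 _ p j) _ => [q|]; first by split.
by rewrite ler_pM2r // ler_weXn2l.
Qed.

End Weights.

Section ExtendedSums.
Variable R : realType.
Local Open Scope ereal_scope.

Lemma esumZl_le (T : choiceType) (S : set T) (c : R) (f : T -> \bar R) :
  (0 <= c)%R -> (forall x, 0 <= f x) ->
  \esum_(x in S) (c%:E * f x) <= c%:E * \esum_(x in S) f x.
Proof.
move=> c0 f0; apply: ge_ereal_sup => _ [X [finX XS] <-].
rewrite -ge0_mule_fsumr // lee_wpmul2l ?lee_fin //.
by apply: esum_ge; exists X.
Qed.

Lemma esum_shift_int (f : int -> \bar R) (s : int) :
  \esum_(p in [set: int]) f (p + s)%R = \esum_(p in [set: int]) f p.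
Proof.
rewrite [RHS](reindex_esum [set: int] [set: int] (fun p => p + s)%R) //.
by rewrite setTT_bijective; exists (fun p => p - s)%R => p; rewrite /= ?addrK ?subrK.
Qed.

Lemma esum_finite_range_lt_pinfty (T : choiceType) (I : finType) (g : I -> T)
    (f : T -> \bar R) :
  (forall x, 0 <= f x) -> (forall x, f x < +oo) ->
  (forall x, ~ range g x -> f x = 0) ->
  \esum_(x in [set: T]) f x < +oo.
Proof.
move=> f0 f_fin f_out; rewrite (esumID (range g)) // [X in _ + X]esum1 ?adde0; last first.
  by move=> x [_ /= gx]; exact: f_out.
have fin_g : finite_set (range g) by exact/finite_image/finite_finset.
rewrite setTI esum_fset // fsbig_finite //=.
by apply: (big_ind (fun x => x < +oo)) => // x y; exact: lte_add_pinfty.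
Qed.

End ExtendedSums.

Section LoopOperators.
Variable R : realType.
Local Notation C := R[i].

Lemma idx_le N (k : 'I_N.*2.+1) : (`|idx N k| <= N)%N.
Proof. by have := ltn_ord k; lia. Qed.

Lemma vsq_loop_act_le n N (Y : int -> 'M[C]_n) : exists2 c : R, 0 <= c &
  forall (b : seqH R n) p,
    vsq (loop_act N Y b p) <= c * \sum_(k < N.*2.+1) vsq (b (p + idx N k)).
Proof.
exists ((N.*2.+1)%:R * \sum_(k < N.*2.+1) n%:R * frob2 (Y (idx N k))).
  by rewrite mulr_ge0 ?sumr_ge0 // => k _; rewrite mulr_ge0 ?frob2_ge0.
move=> b p; apply: le_trans (vsq_sum_le _) _; rewrite -mulrA ler_wpM2l //.
rewrite mulr_sumr; apply: ler_sum => k _; apply: le_trans (vsq_mulmx_le _ _) _.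
rewrite ler_wpM2r ?vsq_ge0 // (bigD1 k) //= lerDl.
by rewrite sumr_ge0 // => l _; rewrite mulr_ge0 ?frob2_ge0.
Qed.

Lemma loop_act_bounded (a : int -> R) n N (Y : int -> 'M[C]_n) :
  admissible_weight a -> bounded_op a (loop_act N Y).
Proof.
move=> ha; have [L L0 a_shift] := admissible_weight_shift_le N ha.
have a_ge0 p : 0 <= a p by case: ha => a_gt0 _ _ _; exact/ltW.
have [c c0 vsq_le] := vsq_loop_act_le N Y.
pose w (b : seqH R n) p := a p * vsq (b p).
have w_ge0 b p : 0 <= w b p by rewrite mulr_ge0 ?vsq_ge0.
exists (c * L * (N.*2.+1)%:R) => b _.
have wle p : w (loop_act N Y b) p <= c * L * \sum_(k < N.*2.+1) w b (p + idx N k).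
  apply: le_trans (ler_wpM2l (a_ge0 p) (vsq_le b p)) _.
  rewrite mulrCA -mulrA ler_wpM2l // !mulr_sumr ler_sum // => k _.
  by rewrite mulrA ler_wpM2r ?vsq_ge0 ?a_shift ?idx_le.
rewrite /wnorm2 EFinM -muleA.
have sum_wle : (\esum_(p in [set: int]) (w (loop_act N Y b) p)%:E <=
    \esum_(p in [set: int]) ((c * L)%:E * (\sum_(k < N.*2.+1) w b (p + idx N k))%:E))%E.
  by apply: le_esum => p _; rewrite -EFinM lee_fin wle.
apply: le_trans sum_wle _.
apply: le_trans (esumZl_le _ _ _) _; first by rewrite mulr_ge0 // ltW.
  by move=> p; rewrite lee_fin sumr_ge0.
apply: lee_wpmul2l; first by rewrite lee_fin mulr_ge0 // ltW.
under eq_esum do rewrite -sumEFin.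
rewrite esum_sum; last by move=> *; rewrite lee_fin.
under eq_bigr do rewrite (esum_shift_int (fun p => (w b p)%:E)).
by rewrite sumr_const card_ord mule_natl.
Qed.

Local Notation jsign p := (if 0 < p then 'i else - 'i : C).

Lemma wnorm2_finite_range_lt_pinfty (a : int -> R) n (I : finType) (g : I -> int)
    (b : seqH R n) :
  (forall p, 0 <= a p) -> (forall p, ~ range g p -> b p = 0) -> (wnorm2 a b < +oo)%E.
Proof.
move=> a_ge0 b_out; apply: (esum_finite_range_lt_pinfty (g := g)) => [p|p|p /b_out ->].
- by rewrite lee_fin mulr_ge0 ?vsq_ge0.
- exact: ltry.
- by rewrite vsq0 mulr0.
Qed.

Lemma commJ_loop_act n N (Y : int -> 'M[C]_n) (b : seqH R n) p :
  commJ (loop_act N Y) b p =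
  \sum_(k < N.*2.+1) (jsign (p + idx N k) - jsign p) *: (Y (idx N k) *m b (p + idx N k)).
Proof.
rewrite /commJ /loop_act /Jop scaler_sumr -sumrB; apply: eq_bigr => k _.
by rewrite scalerBl -scalemxAr.
Qed.

Lemma commJ_loop_act_ebasis_out n N (Y : int -> 'M[C]_n) p0 j p :
  ~ range (fun k : 'I_N.*2.+1 => p0 - idx N k) p ->
  commJ (loop_act N Y) (ebasis R p0 j) p = 0.
Proof.
move=> p_out; rewrite commJ_loop_act big1 // => k _.
rewrite /ebasis; case: eqP => [pk|_]; last by rewrite mulmx0 scaler0.
by case: p_out; exists k; rewrite // -pk addrK.
Qed.

Lemma commJ_loop_act_ebasis_far n N (Y : int -> 'M[C]_n) p0 j p :
  (N < `|p0|)%N -> commJ (loop_act N Y) (ebasis R p0 j) p = 0.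
Proof.
move=> p0_far; rewrite commJ_loop_act big1 // => k _.
rewrite /ebasis; case: eqP => [pk|_]; last by rewrite mulmx0 scaler0.
have k_le := idx_le k; have -> : (0 < p + idx N k) = (0 < p) by apply/idP/idP; lia.
by rewrite subrr scale0r.
Qed.

Lemma loop_act_commJ_hilbert_schmidt (a : int -> R) n N (Y : int -> 'M[C]_n) :
  admissible_weight a -> hilbert_schmidt a (commJ (loop_act N Y)).
Proof.
case=> a_gt0 _ _ _; have a_ge0 p : 0 <= a p by exact/ltW.
apply: (esum_finite_range_lt_pinfty (g := fun x : 'I_N.*2.+1 * 'I_n => (idx N x.1, x.2))).
- by move=> x; rewrite mule_ge0 ?lee_fin ?invr_ge0 // esum_ge0 // => p _;
    rewrite lee_fin mulr_ge0 ?vsq_ge0.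
- move=> [p0 j]; rewrite lte_mul_pinfty ?lee_fin ?invr_ge0 //.
  exact: wnorm2_finite_range_lt_pinfty (commJ_loop_act_ebasis_out Y j).
move=> [p0 j] out; have p0_far : (N < `|p0|)%N.
  rewrite ltnNge; apply/negP => p0_near; apply: out.
  have k_lt : (`|(p0 + N%:Z)%R| < N.*2.+1)%N by lia.
  by exists (Ordinal k_lt, j) => //=; congr pair; lia.
rewrite /wnorm2 esum1 ?mule0 // => p _.
by rewrite commJ_loop_act_ebasis_far // vsq0 mulr0.
Qed.

End LoopOperators.

Theorem mainTheorem19 (R : realType) (a : int -> R) (n : nat)
  (ha : admissible_weight a) (N : nat) (A : int -> 'M[R[i]]_n)
  (hA : in_LpolU N A) :
  in_GL_J a (loop_act N A).
Proof.
have [_ A_unitary] := hA.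
have A_adj z : `|z| = 1 -> loop_eval N A z *m loop_eval N (loop_adj A) z = 1%:M.
  by move=> z1; rewrite -loop_eval_adj //; exact: A_unitary.
have adj_A z : `|z| = 1 -> loop_eval N (loop_adj A) z *m loop_eval N A z = 1%:M.
  by move=> z1; apply: mulmx1C; exact: A_adj.
split.
- exact: loop_act_bounded.
- exists (loop_act N (loop_adj A)); split; first exact: loop_act_bounded.
  by move=> b _; split; exact: loop_act_inverse.
- exact: loop_act_commJ_hilbert_schmidt.
Qed.
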